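(* Let $X$ and $Y$ be Hausdorff topological spaces with no isolated points. Then every topological arc contained in the product space $X\times Y$ has empty interior in $X\times Y$.
   Context: A topological arc is a subset of a topological space that is homeomorphic to $\mathbb{R}$. *)

From HB Require Import structures.
From mathcomp Require Import all_boot all_order all_algebra.
From mathcomp Require Import all_classical all_reals all_analysis.
Set Implicit Arguments. Unset Strict Implicit. Unset Printing Implicit Defensive.
Import Order.TTheory GRing.Theory Num.Theory.
Import numFieldTopology.Exports.
Local Open Scope classical_set_scope.

(* x is an isolated point of T iff the singleton {x} is open. *)
Definition no_isolated_points (T : topologicalType) : Prop :=
  forall x : T, ~ open [set x].

(* A is a topological arc: A (with the subspace topology) is homeomorphic to
   the real line R. *)
Definition is_arc (R : realType) (T : topologicalType) (A : set T) : Prop :=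
  exists (f : R -> T) (g : T -> R),
    [/\ continuous f, range f = A, cancel f g & {within A, continuous g}].

(** If an arc [A = f(R)] contained a neighbourhood of [p = f(t)], continuity of
    [f] gives a ball [I] around [t] with [f(I)] inside a box [Q x S] contained in
    [A].  The set [P1 x P2 \ {p}], where [P1], [P2] are the projections of
    [f(I)], is connected: it is a union of crosses through a common point,
    which exists because [P1] and [P2] are neighbourhoods of the coordinates of
    [p] in spaces without isolated points.  It lies in [A], so its image under
    [f^-1] is an interval of R containing points on both sides of [t], hence
    [t] itself, i.e. the set contains [p]. *)

From HB Require Import structures.
From mathcomp Require Import all_boot all_order all_algebra.
From mathcomp Require Import all_classical all_reals all_analysis.
From mathcomp Require Import lra.
Import Order.TTheory GRing.Theory Num.Theory.
Import numFieldTopology.Exports.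
Local Open Scope classical_set_scope.
Local Open Scope ring_scope.
Set Implicit Arguments. Unset Strict Implicit.

Lemma no_isolated_nbhs_neq (T : topologicalType) (x : T) (U : set T) :
  no_isolated_points T -> nbhs x U -> exists2 y, U y & y != x.
Proof.
move=> nT Ux; apply: contrapT => /forall2NP U_x; apply: (nT x).
rewrite openE => _ ->; apply: filterS Ux => y Uy.
by apply/eqP; case: (U_x y) => // /negP/negbNE.
Qed.

Lemma nbhs_image_fst (X Y : topologicalType) (p : X * Y) (U : set (X * Y)) :
  nbhs p U -> nbhs p.1 (fst @` U).
Proof.
move=> [[Q S] /= [Qp Sp] QSU]; apply: filterS Qp => x Qx.
by exists (x, p.2) => //; apply: QSU; split => //; exact: nbhs_singleton.
Qed.

Lemma nbhs_image_snd (X Y : topologicalType) (p : X * Y) (U : set (X * Y)) :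
  nbhs p U -> nbhs p.2 (snd @` U).
Proof.
move=> [[Q S] /= [Qp Sp] QSU]; apply: filterS Sp => y Sy.
by exists (p.1, y) => //; apply: QSU; split => //; exact: nbhs_singleton.
Qed.

Lemma connected_image (T U : topologicalType) (f : T -> U) (A : set T) :
  continuous f -> connected A -> connected (f @` A).
Proof. by move=> cf cA; apply: connected_continuous_connected cA _; exact: continuous_subspaceT. Qed.

Lemma connected_set1X (X Y : topologicalType) (x : X) (P : set Y) :
  connected P -> connected ([set x] `*` P).
Proof.
move=> cP; have -> : [set x] `*` P = (pair x) @` P.
  by apply/seteqP; split => [[_ y] [/= -> Py]|_ [y Py <-]] //; exists y.
by apply: connected_image cP => y; apply: cvg_pair; [exact: cvg_cst|exact: cvg_id].
Qed.

Lemma connected_setX1 (X Y : topologicalType) (y : Y) (P : set X) :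
  connected P -> connected (P `*` [set y]).
Proof.
move=> cP; have -> : P `*` [set y] = (fun x => (x, y)) @` P.
  by apply/seteqP; split => [[x _] [/= Px ->]|_ [x Px <-]] //; exists x.
by apply: connected_image cP => x; apply: cvg_pair; [exact: cvg_id|exact: cvg_cst].
Qed.

(* Every point [q] of the punctured box lies on a cross made of a horizontal
   and a vertical line of the box, chosen to avoid [(x0, y0)], and all these
   crosses pass through [(x1, y1)]. *)
Lemma connected_setXD1 (X Y : topologicalType) (P1 : set X) (P2 : set Y)
    (x0 x1 : X) (y0 y1 : Y) :
  connected P1 -> connected P2 -> P1 x1 -> P2 y1 -> x1 != x0 -> y1 != y0 ->
  connected ((P1 `*` P2) `\ (x0, y0)).
Proof.
move=> cP1 cP2 P1x1 P2y1 x10 y10.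
pose cross (q : X * Y) := if q.1 == x0
  then (P1 `*` [set q.2]) `|` ([set x1] `*` P2)
  else ([set q.1] `*` P2) `|` (P1 `*` [set y1]).
have -> : (P1 `*` P2) `\ (x0, y0) =
    \bigcup_(q in (P1 `*` P2) `\ (x0, y0)) cross q.
  apply/seteqP; split => [q Bq|r [q [[P1q P2q] q0]]].
    by exists q => //; case: Bq => -[? ?] _; rewrite /cross; case: ifP; left.
  rewrite /cross; case: ifPn => [/eqP q10|q10] [[/= r1 r2]|[/= r1 r2]].
  - split=> [|/= r0]; first by rewrite r2.
    by apply: q0; rewrite [q]surjective_pairing q10 -r2 r0.
  - by split=> [|/= r0]; [rewrite r1 | move: x10; rewrite -r1 r0 eqxx].
  - by split=> [|/= r0]; [rewrite r1 | move: q10; rewrite -r1 r0 eqxx].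
  - by split=> [|/= r0]; [rewrite r2 | move: y10; rewrite -r2 r0 eqxx].
apply: bigcup_connected.
  by exists (x1, y1) => q _; rewrite /cross; case: ifP; right.
move=> q [[P1q P2q] _]; rewrite /cross; case: ifP => _; apply: connectedU.
- by exists (x1, q.2).
- exact: connected_setX1.
- exact: connected_set1X.
- by exists (q.1, y1).
- exact: connected_set1X.
- exact: connected_setX1.
Qed.

Section arc_parametrization.
Variables (R : realType) (T : topologicalType) (A : set T).
Variables (f : R -> T) (g : T -> R).
Hypotheses (rangefA : range f = A) (fK : cancel f g).
Hypothesis (cg : {within A, continuous g}).

Lemma arc_invK q : A q -> f (g q) = q.
Proof. by rewrite -rangefA => -[t _ <-]; rewrite fK. Qed.

Lemma arc_connected_between (V : set T) (a b t : R) :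
  connected V -> V `<=` A -> V (f a) -> V (f b) -> a <= t <= b -> V (f t).
Proof.
move=> cV VA Va Vb abt.
have /connected_intervalP iV : connected (g @` V).
  by apply: connected_continuous_connected cV _; exact: continuous_subspaceW cg.
have [q Vq gq] := iV _ _ (ex_intro2 _ _ _ Va (fK a)) (ex_intro2 _ _ _ Vb (fK b)) _ abt.
by rewrite -gq arc_invK //; exact: VA.
Qed.

Lemma arc_nbhs_image (p : T) (I : set R) :
  A° p -> nbhs (g p) I -> nbhs p (f @` I).
Proof.
move=> Ap Ip; have cgp : g @ nbhs p --> g p.
  by rewrite (nbhs_subspace_interior Ap); exact: cg.
have gI : nbhs p (A `&` g @^-1` I) by apply: filterI => //; exact: cgp.
by apply: filterS gI => q [Aq Iq]; exists (g q) => //; exact: arc_invK.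
Qed.

Lemma arc_connected_punctured_ball (V : set T) (t e : R) : 0 < e ->
  connected V -> V `<=` A -> (forall s, ball t e s -> s != t -> V (f s)) ->
  V (f t).
Proof.
move=> e0 cV VA Vball.
have ltat : t - e / 2 < t by rewrite ltrBlDr ltrDl divr_gt0.
have ltbt : t < t + e / 2 by rewrite ltrDl divr_gt0.
have Iat : ball t e (t - e / 2).
  by rewrite ball_itv /= in_itv /=; apply/andP; split; lra.
have Ibt : ball t e (t + e / 2).
  by rewrite ball_itv /= in_itv /=; apply/andP; split; lra.
apply: (arc_connected_between cV VA (Vball _ Iat _) (Vball _ Ibt _)).
- by rewrite lt_eqF.
- by rewrite gt_eqF.
- by rewrite !ltW.
Qed.

End arc_parametrization.

Theorem lemma3p5 (R : realType) (X Y : topologicalType)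
    (hX : hausdorff_space X) (hY : hausdorff_space Y)
    (nX : no_isolated_points X) (nY : no_isolated_points Y)
    (A : set (X * Y)%type) :
  is_arc R A -> interior A = set0.
Proof.
move=> [f [g [cf rangefA fK cg]]]; apply/seteqP; split => // -[x0 y0] Ap.
set t := g (x0, y0).
have ftp : f t = (x0, y0) by apply: (arc_invK rangefA fK); exact: interior_subset.
have [[Q S] /= [Qx0 Sy0] QSA] := Ap.
have /nbhs_ballP[e /= e0 fIQS] : nbhs t (f @^-1` (Q `*` S)).
  by apply: cf; rewrite ftp; exists (Q, S).
pose J := f @` ball t e.
have Jp : nbhs (x0, y0) J := arc_nbhs_image rangefA fK cg Ap (nbhsx_ballx _ _ e0).
have [x1 Jx1 x10] := no_isolated_nbhs_neq nX (nbhs_image_fst Jp).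
have [y1 Jy1 y10] := no_isolated_nbhs_neq nY (nbhs_image_snd Jp).
pose V := ((fst @` J) `*` (snd @` J)) `\ (x0, y0).
have cV : connected V.
  have cJ : connected J.
    apply: connected_image => //; apply/connected_intervalP.
    by rewrite ball_itv; exact: interval_is_interval.
  by apply: connected_setXD1 x10 y10 => //; apply: connected_image cJ => q;
    [exact: cvg_fst|exact: cvg_snd].
have VA : V `<=` A.
  move=> [q1 q2] [[/= [_ [u Iu <-] <-] [_ [v Iv <-] <-]] _]; apply: QSA.
  by split; [case: (fIQS u Iu)|case: (fIQS v Iv)].
have : V (f t).
  apply: (arc_connected_punctured_ball rangefA fK cg e0 cV VA) => s Is st.
  split=> [|/= fsp]; first by split; exists (f s) => //; exists s.
  by move/eqP: st; apply; rewrite -(fK s) fsp.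
by rewrite ftp => -[_]; apply.
Qed.
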